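(* For any qubit channel (completely positive trace-preserving map) $\Lambda$ on $2\times2$ density matrices, $$2\le 2\mathcal{F}_c(\Lambda)+D_{C_{l_1}}(\Lambda)\le 3.$$
   Context: Coherence is taken with respect to the computational basis $\{|0\rangle,|1\rangle\}$. $C_{l_1}(\rho)=\sum_{j\ne k}|\langle j|\rho|k\rangle|$. The set of maximally coherent qubit states is $\mathcal{M}=\{\frac{1}{\sqrt2}(e^{\mathfrak{i}\theta_0}|0\rangle+e^{\mathfrak{i}\theta_1}|1\rangle):\theta_0,\theta_1\in[0,2\pi]\}$; the coherence fraction of a state is $F_c(\rho)=\max_{|\phi\rangle\in\mathcal{M}}\langle\phi|\rho|\phi\rangle$. The optimal coherence fraction of $\Lambda$ is $\mathcal{F}_c(\Lambda)=\max_{|\psi\rangle}F_c\big(\Lambda(|\psi\rangle\langle\psi|)\big)$ over all pure qubit states $|\psi\rangle$. The decohering power of $\Lambda$ with respect to $C_{l_1}$ is $D_{C_{l_1}}(\Lambda)=\max_{|\phi\rangle\in\mathcal{M}}\{C_{l_1}(|\phi\rangle\langle\phi|)-C_{l_1}(\Lambda(|\phi\rangle\langle\phi|))\}=1-\min_{|\phi\rangle\in\mathcal{M}}C_{l_1}\big(\Lambda(|\phi\rangle\langle\phi|)\big)$. *)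

From HB Require Import structures.
From mathcomp Require Import all_boot all_order all_algebra.
From mathcomp Require Import complex.
From mathcomp Require Import all_classical all_reals.
From mathcomp Require Import trigo.
Set Implicit Arguments. Unset Strict Implicit. Unset Printing Implicit Defensive.
Import Order.TTheory GRing.Theory Num.Theory.
Local Open Scope ring_scope.
Local Open Scope classical_set_scope.
Local Open Scope complex_scope.

Section Qubit.
Variable R : realType.
Local Notation C := (R[i]).

Definition adj (m n : nat) (A : 'M[C]_(m, n)) : 'M[C]_(n, m) :=
  map_mx (@conjc R) A^T.

Definition proj (psi : 'cV[C]_2) : 'M[C]_2 := psi *m adj psi.

Definition unit_vec (psi : 'cV[C]_2) : Prop :=
  \sum_(i < 2) (Normc.normc (psi i 0)) ^+ 2 = 1.

Definition expi (t : R) : C := Complex (cos t) (sin t).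

Definition mcs (t0 t1 : R) : 'cV[C]_2 :=
  \col_(i < 2) (((Num.sqrt 2)^-1)%:C * expi (if i == ord0 then t0 else t1)).

Definition in_angle (t : R) : Prop := 0 <= t <= 2 * pi.

Definition MCS : set 'cV[C]_2 :=
  [set phi | exists t0 t1, in_angle t0 /\ in_angle t1 /\ phi = mcs t0 t1].

Definition Cl1 (rho : 'M[C]_2) : R :=
  \sum_(j < 2) \sum_(k < 2 | j != k) Normc.normc (rho j k).

(* <phi| rho |phi>  (real part; it is real for Hermitian rho) *)
Definition expect (phi : 'cV[C]_2) (rho : 'M[C]_2) : R :=
  complex.Re ((adj phi *m rho *m phi) 0 0).

(* coherence fraction F_c(rho) = max over M (taken as supremum) *)
Definition coh_frac (rho : 'M[C]_2) : R :=
  sup [set expect phi rho | phi in MCS].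

(* positive semidefiniteness of an n x n block matrix with 2x2 blocks,
   i.e. of an element of M_n(M_2) = M_{2n}(C) *)
Definition psd_block (n : nat) (X : 'I_n -> 'I_n -> 'M[C]_2) : Prop :=
  forall v : 'I_n -> 'cV[C]_2,
    0 <= \sum_(i < n) \sum_(j < n) (adj (v i) *m X i j *m v j) 0 0.

Definition is_qubit_channel (L : 'M[C]_2 -> 'M[C]_2) : Prop :=
  (forall (a : C) (X Y : 'M[C]_2), L (a *: X + Y) = a *: L X + L Y) /\
  (forall (n : nat) (X : 'I_n -> 'I_n -> 'M[C]_2),
      psd_block X -> psd_block (fun i j => L (X i j))) /\
  (forall X : 'M[C]_2, \tr (L X) = \tr X).

Definition opt_coh_frac (L : 'M[C]_2 -> 'M[C]_2) : R :=
  sup [set coh_frac (L (proj psi)) | psi in unit_vec].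

Definition decoh_power (L : 'M[C]_2 -> 'M[C]_2) : R :=
  sup [set Cl1 (proj phi) - Cl1 (L (proj phi)) | phi in MCS].

End Qubit.

(* For the upper bound, the fidelity of a state with a pure state is at most 1,
   and C_l1 >= 0 while C_l1 = 1 on maximally coherent states, so F_c <= 1 and
   D <= 1.  For the lower bound take rho = L(|+><+|) and write
   rho_01 = |rho_01| e^{-it}.  The maximally coherent state
   (|0> + e^{it}|1>)/sqrt 2 has fidelity (1 + C_l1(rho))/2 with rho, while the
   decohering power is at least C_l1(|+><+|) - C_l1(rho) = 1 - C_l1(rho); the
   C_l1(rho) terms cancel in 2 F_c + D. *)

From Pilot Require Import Defs.
From HB Require Import structures.
From mathcomp Require Import all_boot all_order all_algebra.
From mathcomp Require Import complex.
From mathcomp Require Import all_classical all_reals trigo.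
From mathcomp Require Import ring lra.
Set Implicit Arguments. Unset Strict Implicit. Unset Printing Implicit Defensive.
Import Order.TTheory GRing.Theory Num.Theory.
Local Open Scope ring_scope.
Local Open Scope complex_scope.

Section QubitCoherence.
Variable R : realType.
Local Notation C := R[i].
Local Notation normc := Normc.normc.

Lemma big_ord2 (V : nmodType) (F : 'I_2 -> V) : \sum_(i < 2) F i = F 0 + F 1.
Proof. rewrite big_ord_recl big_ord1; congr (_ + F _); exact: val_inj. Qed.

Lemma mulcJ (z : C) : z * z^* = (normc z ^+ 2)%:C.
Proof.
case: z => a b /=; rewrite sqr_sqrtr ?addr_ge0 ?sqr_ge0 //.
by simpc; congr (_ +i* _); ring.
Qed.

Lemma normcJ (z : C) : normc z^* = normc z.
Proof. by case: z => a b /=; rewrite sqrrN. Qed.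

Lemma adjM m n p (A : 'M[C]_(m, n)) (B : 'M[C]_(n, p)) : adj (A *m B) = adj B *m adj A.
Proof. by rewrite /adj trmx_mul map_mxM. Qed.

Lemma adjK m n (A : 'M[C]_(m, n)) : adj (adj A) = A.
Proof. by apply/matrixP => i j; rewrite !mxE conjcK. Qed.

Lemma qform2E (M : 'M[C]_2) (v : 'cV[C]_2) :
  (adj v *m M *m v) 0 0 = (v 0 0)^* * (M 0 0 * v 0 0 + M 0 1 * v 1 0)
                        + (v 1 0)^* * (M 1 0 * v 0 0 + M 1 1 * v 1 0).
Proof. by rewrite !mxE !big_ord2 !mxE !big_ord2 !mxE; ring. Qed.

Definition psd2 (M : 'M[C]_2) : Prop := forall v : 'cV[C]_2, 0 <= (adj v *m M *m v) 0 0.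

Definition qubit_state (M : 'M[C]_2) : Prop := psd2 M /\ \tr M = 1.

Lemma proj_psd2 (psi : 'cV[C]_2) : psd2 (Defs.proj psi).
Proof.
move=> v; set w := adj v *m psi.
have -> : adj v *m Defs.proj psi *m v = w *m adj w by rewrite adjM adjK /Defs.proj !mulmxA.
clearbody w; rewrite mxE big_ord1 !mxE; exact: mulcJ_ge0.
Qed.

Lemma tr_proj (psi : 'cV[C]_2) : unit_vec psi -> \tr (Defs.proj psi) = 1.
Proof.
rewrite /unit_vec /mxtrace !big_ord2 !mxE !big_ord1 !mxE !mulcJ => h.
by rewrite -rmorphD h.
Qed.

Lemma psd2_hermitian (M : 'M[C]_2) : psd2 M -> M 1 0 = (M 0 1)^*.
Proof.
move=> psdM; pose e (a b : C) : 'cV[C]_2 := \col_i (if i == 0 then a else b).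
have test a b := psdM (e a b).
have := test 1 0; have := test 0 1; have := test 1 1; have := test 1 'i.
rewrite !qform2E !mxE /=.
case: (M 0 0) => [p p']; case: (M 0 1) => [x y]; case: (M 1 0) => [u w]; case: (M 1 1) => [q q'].
simpc => /andP[/eqP i1 _] /andP[/eqP i2 _] /andP[/eqP i3 _] /andP[/eqP i4 _].
by congr (_ +i* _); lra.
Qed.

Lemma expiDpi (t : R) : expi (t + pi) = - expi t.
Proof. by rewrite /expi cosDpi sinDpi. Qed.

Lemma expi0 : expi 0 = 1 :> C.
Proof. by rewrite /expi cos0 sin0. Qed.

Lemma normc_expi (t : R) : normc (expi t) = 1.
Proof. by rewrite /= cos2Dsin2 sqrtr1. Qed.

Lemma sqr_invsqrt2 : (Num.sqrt 2)^-1 ^+ 2 = 2^-1 :> R.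
Proof. by rewrite exprVn sqr_sqrtr // ler0n. Qed.

Lemma normc_mcs (t0 t1 : R) i : normc (mcs t0 t1 i 0) = (Num.sqrt 2)^-1.
Proof.
rewrite mxE Normc.normcM normc_expi mulr1 /= expr0n addr0 sqrtr_sqr.
by rewrite ger0_norm // invr_ge0 sqrtr_ge0.
Qed.

Lemma unit_vec_mcs (t0 t1 : R) : unit_vec (mcs t0 t1).
Proof. rewrite /unit_vec big_ord2 !normc_mcs sqr_invsqrt2; lra. Qed.

Lemma Cl1E (M : 'M[C]_2) : Cl1 M = normc (M 0 1) + normc (M 1 0).
Proof.
by rewrite /Cl1 big_ord2 big_mkcond big_ord2 big_mkcond big_ord2 /= add0r addr0.
Qed.

Lemma Cl1_ge0 (M : 'M[C]_2) : 0 <= Cl1 M.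
Proof. by rewrite Cl1E addr_ge0 // (@normr_ge0 _ (Rcomplex R)). Qed.

Lemma projE (psi : 'cV[C]_2) j k : Defs.proj psi j k = psi j 0 * (psi k 0)^*.
Proof. by rewrite !mxE big_ord1 !mxE. Qed.

Lemma Cl1_proj_mcs (t0 t1 : R) : Cl1 (Defs.proj (mcs t0 t1)) = 1.
Proof.
by rewrite Cl1E !projE !Normc.normcM !normcJ !normc_mcs -expr2 sqr_invsqrt2; lra.
Qed.

Lemma qform2_add_flip (M : 'M[C]_2) (v w : 'cV[C]_2) :
  w 0 0 = v 0 0 -> w 1 0 = - v 1 0 ->
  (adj v *m M *m v) 0 0 + (adj w *m M *m w) 0 0
    = 2%:R * (v 0 0 * (v 0 0)^* * M 0 0 + v 1 0 * (v 1 0)^* * M 1 1).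
Proof. by move=> w0 w1; rewrite !qform2E w0 w1 rmorphN; ring. Qed.

(* mcs t0 t1 and mcs t0 (t1 + pi) form an orthonormal basis. *)
Lemma expect_mcs_add_antipodal (M : 'M[C]_2) (t0 t1 : R) :
  expect (mcs t0 t1) M + expect (mcs t0 (t1 + pi)) M = complex.Re (\tr M).
Proof.
rewrite /expect -raddfD /= qform2_add_flip; last 2 first.
- by rewrite !mxE.
- by rewrite !mxE /= expiDpi mulrN.
rewrite !mulcJ !normc_mcs sqr_invsqrt2 /mxtrace big_ord2 -mulrDr mulrA.
have -> : 2 = (2%:R)%:C :> C by rewrite rmorph_nat.
by rewrite -rmorphM mulfV ?mul1r ?pnatr_eq0.
Qed.

Lemma expect_mcs0 (M : 'M[C]_2) (t : R) : M 1 0 = (M 0 1)^* ->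
  2 * expect (mcs 0 t) M = complex.Re (\tr M) + 2 * complex.Re (M 0 1 * expi t).
Proof.
move=> hermM; rewrite /expect qform2E !mxE /= expi0 mulr1 hermM /mxtrace big_ord2.
set s := (Num.sqrt 2)^-1.
have -> : forall e, s%:C^* * (M 0 0 * s%:C + M 0 1 * (s%:C * e))
                    + (s%:C * e)^* * ((M 0 1)^* * s%:C + M 1 1 * (s%:C * e))
  = (s ^+ 2)%:C * (M 0 0 + M 1 1 * (e * e^*) + (M 0 1 * e + (M 0 1 * e)^*)).
  move=> [u w]; case: (M 0 0) => a b; case: (M 0 1) => x y; case: (M 1 1) => c d.
  by simpc; congr (_ +i* _); ring.
rewrite mulcJ normc_expi expr1n mulr1 addcJ sqr_invsqrt2.
case: (M 0 0) => a b; case: (M 1 1) => c d; simpc => /=.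
by rewrite mulrA divff ?pnatr_eq0 // mul1r; ring.
Qed.

Lemma in_angle0 : in_angle (0 : R).
Proof. by rewrite /in_angle lexx mulr_ge0 ?ler0n ?pi_ge0. Qed.

Lemma in_angle_cos_sin (c s : R) : c ^+ 2 + s ^+ 2 = 1 ->
  exists t, [/\ in_angle t, cos t = c & sin t = s].
Proof.
move=> cs1; have pi0 := pi_ge0 R.
have c1 : -1 <= c <= 1.
  by rewrite -ler_norml -(expr_le1 (n := 2)) // real_normK ?num_real //; nra.
have cK : cos (acos c) = c by apply: acosK; rewrite in_itv /= c1.
have sK : sin (acos c) = `|s| by rewrite sin_acos // -cs1 addrC addKr sqrtr_sqr.
have := acos_ge0 c1; have := acos_lepi c1.
case: (leP 0 s) => s0 a1 a0.
- exists (acos c); split; rewrite ?cK ?sK ?ger0_norm //.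
  by rewrite /in_angle; apply/andP; split; lra.
- exists (2 * pi - acos c); split.
  + by rewrite /in_angle; apply/andP; split; lra.
  + by rewrite cosB mulr_natl cos2pi sin2pi cK sK; ring.
  + by rewrite sinB mulr_natl cos2pi sin2pi cK sK ltr0_norm //; ring.
Qed.

Lemma in_angle_Re_mul_expi (z : C) :
  exists t, in_angle t /\ complex.Re (z * expi t) = normc z.
Proof.
have [->|z0] := eqVneq z 0.
  by exists 0; rewrite mul0r Normc.normc0; split; first exact: in_angle0.
case: z z0 => x y z0; set r := normc (x +i* y).
have r0 : r != 0 by apply: contra_neq z0 => /Normc.eq0_normc.
have r2 : r ^+ 2 = x ^+ 2 + y ^+ 2 by rewrite sqr_sqrtr // addr_ge0 ?sqr_ge0.
have [|t [ht ct st]] := @in_angle_cos_sin (x / r) (- y / r).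
  by rewrite !expr_div_n sqrrN -mulrDl -r2 divff // expf_neq0.
exists t; split => //=; rewrite ct st.
apply: (mulIf r0); rewrite mulrBl !mulrA !divfK // -[RHS]expr2 r2; ring.
Qed.

Lemma qubit_state_expect_mcs (rho : 'M[C]_2) : qubit_state rho ->
  exists2 t, in_angle t & 2 * expect (mcs 0 t) rho = 1 + Cl1 rho.
Proof.
case=> psd_rho tr_rho; have herm_rho := psd2_hermitian psd_rho.
have [t [ht Ret]] := in_angle_Re_mul_expi (rho 0 1).
exists t => //; rewrite expect_mcs0 // tr_rho Ret Cl1E herm_rho normcJ /=; lra.
Qed.

Lemma expect_ge0 (M : 'M[C]_2) (v : 'cV[C]_2) : psd2 M -> 0 <= expect v M.
Proof. by move/(_ v); rewrite lecE => /andP[]. Qed.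

Lemma expect_mcs_le1 (rho : 'M[C]_2) (t0 t1 : R) : qubit_state rho -> expect (mcs t0 t1) rho <= 1.
Proof.
case=> psd_rho tr_rho; have := expect_mcs_add_antipodal rho t0 t1.
have := expect_ge0 (mcs t0 (t1 + pi)) psd_rho.
by rewrite tr_rho /=; lra.
Qed.

Lemma MCS_mcs (t0 t1 : R) : in_angle t0 -> in_angle t1 -> MCS (mcs t0 t1).
Proof. by move=> h0 h1; exists t0, t1. Qed.

Lemma MCS_mcs00 : MCS (mcs 0 0 : 'cV[C]_2).
Proof. exact: MCS_mcs in_angle0 in_angle0. Qed.

Lemma coh_frac_ubound (rho : 'M[C]_2) : qubit_state rho ->
  ubound [set expect phi rho | phi in @MCS R] 1.
Proof. by move=> st _ [_ [t0 [t1 [_ [_ ->]]]] <-]; exact: expect_mcs_le1. Qed.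

Lemma coh_frac_le1 (rho : 'M[C]_2) : qubit_state rho -> coh_frac rho <= 1.
Proof.
move=> st; apply: ge_sup (coh_frac_ubound st).
by exists (expect (mcs 0 0) rho), (mcs 0 0) => //; exact: MCS_mcs00.
Qed.

Lemma expect_le_coh_frac (rho : 'M[C]_2) (phi : 'cV[C]_2) :
  qubit_state rho -> MCS phi -> expect phi rho <= coh_frac rho.
Proof. by move=> st Mphi; apply: ub_le_sup; [exists 1; exact: coh_frac_ubound | exists phi]. Qed.

Lemma channel_psd2 (L : 'M[C]_2 -> 'M[C]_2) (X : 'M[C]_2) :
  is_qubit_channel L -> psd2 X -> psd2 (L X).
Proof.
case=> _ [cpL _] psdX v.
have psd_one : psd_block (fun _ _ : 'I_1 => X) by move=> w; rewrite !big_ord1; exact: psdX.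
by move: (cpL 1%N _ psd_one (fun _ => v)); rewrite !big_ord1.
Qed.

Lemma channel_proj_state (L : 'M[C]_2 -> 'M[C]_2) (psi : 'cV[C]_2) :
  is_qubit_channel L -> unit_vec psi -> qubit_state (L (Defs.proj psi)).
Proof.
move=> chL u; split; first exact: channel_psd2 (proj_psd2 psi).
by case: chL => _ [_ ->]; exact: tr_proj.
Qed.

Lemma opt_coh_frac_ubound (L : 'M[C]_2 -> 'M[C]_2) : is_qubit_channel L ->
  ubound [set coh_frac (L (Defs.proj psi)) | psi in @unit_vec R] 1.
Proof. by move=> chL _ [psi u <-]; exact/coh_frac_le1/channel_proj_state. Qed.

Lemma opt_coh_frac_le1 (L : 'M[C]_2 -> 'M[C]_2) : is_qubit_channel L -> opt_coh_frac L <= 1.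
Proof.
move=> chL; apply: ge_sup (opt_coh_frac_ubound chL).
by exists (coh_frac (L (Defs.proj (mcs 0 0)))), (mcs 0 0) => //; exact: unit_vec_mcs.
Qed.

Lemma coh_frac_le_opt (L : 'M[C]_2 -> 'M[C]_2) (psi : 'cV[C]_2) :
  is_qubit_channel L -> unit_vec psi -> coh_frac (L (Defs.proj psi)) <= opt_coh_frac L.
Proof. by move=> chL u; apply: ub_le_sup; [exists 1; exact: opt_coh_frac_ubound | exists psi]. Qed.

Lemma decoh_power_ubound (L : 'M[C]_2 -> 'M[C]_2) :
  ubound [set Cl1 (Defs.proj phi) - Cl1 (L (Defs.proj phi)) | phi in @MCS R] 1.
Proof.
move=> _ [_ [t0 [t1 [_ [_ ->]]]] <-]; rewrite Cl1_proj_mcs.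
by have := Cl1_ge0 (L (Defs.proj (mcs t0 t1))); lra.
Qed.

Lemma decoh_power_le1 (L : 'M[C]_2 -> 'M[C]_2) : decoh_power L <= 1.
Proof.
apply: ge_sup; last exact: decoh_power_ubound.
by exists (1 - Cl1 (L (Defs.proj (mcs 0 0)))), (mcs 0 0); rewrite ?Cl1_proj_mcs //; exact: MCS_mcs00.
Qed.

Lemma decoh_power_ge (L : 'M[C]_2 -> 'M[C]_2) (phi : 'cV[C]_2) : MCS phi ->
  Cl1 (Defs.proj phi) - Cl1 (L (Defs.proj phi)) <= decoh_power L.
Proof. by move=> Mphi; apply: ub_le_sup; [exists 1; exact: decoh_power_ubound | exists phi]. Qed.

End QubitCoherence.

Theorem theorem4 (R : realType) (L : 'M[R[i]]_2 -> 'M[R[i]]_2) :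
  is_qubit_channel L ->
  2 <= 2 * opt_coh_frac L + decoh_power L <= 3.
Proof.
move=> chL; set rho := L (Defs.proj (mcs 0 0)).
have st_rho : qubit_state rho := channel_proj_state chL (unit_vec_mcs 0 0).
have [t ht expect_t] := qubit_state_expect_mcs st_rho.
have F_ge : expect (mcs 0 t) rho <= opt_coh_frac L.
  apply: le_trans (coh_frac_le_opt chL (unit_vec_mcs 0 0)).
  exact: expect_le_coh_frac st_rho (MCS_mcs (in_angle0 R) ht).
have D_ge := decoh_power_ge L (MCS_mcs00 R); rewrite Cl1_proj_mcs -/rho in D_ge.
have F_le1 := opt_coh_frac_le1 chL; have D_le1 := decoh_power_le1 L.
by apply/andP; split; lra.
Qed.
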